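(* Let $(\mathbb{X},\oplus,\otimes,\mathbb{0},\mathbb{1})$ be a linearly ordered, algebraically complete idempotent semifield, and let $\bm{A}\in\mathbb{X}^{n\times n}$ be a matrix such that the matrix $\bm{B}=\bm{A}\oplus\bm{A}^{-}$ has no zero entries. Let $\mu$ be the spectral radius of $\bm{B}$ and $\bm{B}_{\mu}=\mu^{-1}\bm{B}$. Consider the problem of minimizing $d(\bm{A},\bm{x}\bm{x}^{-})$ over all regular vectors $\bm{x}=(x_j)\in\mathbb{X}^{n}$ (i.e. $x_j>\mathbb{0}$ for $j=1,\ldots,n$). Then the minimum value of this problem equals $\mu$, and the set of all solutions is $\{\bm{x}=\bm{B}_{\mu}^{\ast}\bm{u} : \bm{u}\in\mathbb{X}^n,\ \bm{u}\neq\bm{0}\}$.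
   Context: An idempotent semifield is a set $\mathbb{X}$ with associative, commutative operations $\oplus$ (addition) and $\otimes$ (multiplication, usually omitted in writing) with neutral elements $\mathbb{0}$ and $\mathbb{1}$, multiplication distributing over addition, idempotent addition ($x\oplus x=x$), and every nonzero $x$ having an inverse $x^{-1}$ with $xx^{-1}=\mathbb{1}$. It is assumed linearly ordered by the order $x\le y \iff x\oplus y=y$, and algebraically complete: $x^p=a$ is solvable for every $a$ and integer $p>0$, so rational powers are defined. (Examples: $(\mathbb{R}_{>0}\cup\{0\},\max,\times,0,1)$ and $(\mathbb{R}\cup\{-\infty\},\max,+,-\infty,0)$.) Matrix and vector addition and multiplication are defined by the usual formulas with $\oplus,\otimes$ in place of $+,\times$; $\bm{0}$ is the zero vector; a vector is regular if it has no zero entries. For a nonzero column vector $\bm{x}=(x_i)$, $\bm{x}^{-}$ is the row vector with entries $x_i^{-1}$ if $x_i\ne\mathbb{0}$ and $\mathbb{0}$ otherwise. For a nonzero matrix $\bm{A}=(a_{ij})$, $\bm{A}^{-}=(a^{-}_{ij})$ with $a^{-}_{ij}=a_{ji}^{-1}$ if $a_{ji}\neq\mathbb{0}$ and $\mathbb{0}$ otherwise. The trace is $\mathrm{tr}\,\bm{A}=a_{11}\oplus\cdots\oplus a_{nn}$. The distance between square matrices is $d(\bm{A},\bm{B})=\mathrm{tr}(\bm{B}^{-}\bm{A})\oplus\mathrm{tr}(\bm{A}^{-}\bm{B})$. $\bm{I}$ is the identity matrix ($\mathbb{1}$ on the diagonal, $\mathbb{0}$ elsewhere), $\bm{A}^0=\bm{I}$,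 $\bm{A}^p=\bm{A}^{p-1}\bm{A}$. The spectral radius of $\bm{A}\in\mathbb{X}^{n\times n}$ is $\lambda=\bigoplus_{k=1}^{n}\mathrm{tr}^{1/k}(\bm{A}^k)=\bigoplus_{k=1}^{n}\bigoplus_{1\le i_1,\ldots,i_k\le n}(a_{i_1i_2}a_{i_2i_3}\cdots a_{i_ki_1})^{1/k}$. For a square matrix $\bm{M}$ of order $n$, $\bm{M}^{\ast}=\bm{I}\oplus\bm{M}\oplus\cdots\oplus\bm{M}^{n-1}$. *)

From mathcomp Require Import all_boot.
Set Implicit Arguments. Unset Strict Implicit. Unset Printing Implicit Defensive.

(* A linearly ordered, algebraically complete idempotent semifield.
   [inv] is total; its value at zero is fixed to zero (a harmless convention,
   any semifield admits such a total inverse).  [root p a] is a solution of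
   x^p = a (p > 0), provided as data (algebraic completeness). *)
Record isemifield := ISemifield {
  car :> Type;
  szero : car;
  sone : car;
  sadd : car -> car -> car;
  smul : car -> car -> car;
  sinv : car -> car;
  sroot : nat -> car -> car;
  saddA : forall x y z, sadd x (sadd y z) = sadd (sadd x y) z;
  saddC : forall x y, sadd x y = sadd y x;
  sadd0 : forall x, sadd szero x = x;
  smulA : forall x y z, smul x (smul y z) = smul (smul x y) z;
  smulC : forall x y, smul x y = smul y x;
  smul1 : forall x, smul sone x = x;
  smulDl : forall x y z, smul (sadd x y) z = sadd (smul x z) (smul y z);
  smul0 : forall x, smul szero x = szero;
  sone_neq0 : sone <> szero;
  saddid : forall x, sadd x x = x;
  smulV : forall x, x <> szero -> smul x (sinv x) = sone;
  sinv0 : sinv szero = szero;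
  (* linear order: x <= y iff x + y = y *)
  slinear : forall x y, sadd x y = x \/ sadd x y = y;
  sroot_spec : forall (p : nat) (a : car), 0 < p ->
      iter p (smul (sroot p a)) sone = a
}.

Section Ops.
Variable X : isemifield.
Variable n : nat.

Definition sle (x y : X) : Prop := sadd x y = y.

Definition mx := 'I_n -> 'I_n -> X.
Definition vec := 'I_n -> X.

Definition vzero : vec := fun _ => szero X.

Definition mxadd (A B : mx) : mx := fun i j => sadd (A i j) (B i j).
Definition mxmul (A B : mx) : mx :=
  fun i j => \big[@sadd X/szero X]_(k < n) smul (A i k) (B k j).
Definition mxvmul (A : mx) (x : vec) : vec :=
  fun i => \big[@sadd X/szero X]_(k < n) smul (A i k) (x k).
Definition mxscale (c : X) (A : mx) : mx := fun i j => smul c (A i j).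
Definition mxI : mx := fun i j => if i == j then sone X else szero X.
Definition mxpow (A : mx) (p : nat) : mx := iter p (fun M => mxmul M A) mxI.
Definition mxtr (A : mx) : X := \big[@sadd X/szero X]_(i < n) A i i.

Definition mxpinv (A : mx) : mx := fun i j => sinv (A j i).
Definition outer_pinv (x : vec) : mx := fun i j => smul (x i) (sinv (x j)).

Definition mxdist (A B : mx) : X :=
  sadd (mxtr (mxmul (mxpinv B) A)) (mxtr (mxmul (mxpinv A) B)).

Definition spec_rad (A : mx) : X :=
  \big[@sadd X/szero X]_(k < n) sroot k.+1 (mxtr (mxpow A k.+1)).

Definition mxstar (M : mx) : mx :=
  fun i j => \big[@sadd X/szero X]_(k < n) mxpow M k i j.

Definition regular (x : vec) : Prop := forall j, x j <> szero X.

End Ops.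

(* For a regular vector x, d(A, x x^-) <= r holds exactly when B x <= r x
   entrywise, so the problem asks for the least r admitting a regular
   subeigenvector of B.  A regular subeigenvector for r forces tr(B^k) <= r^k,
   hence mu <= r.  Conversely B_mu has no cycle of weight above 1, so by
   shortening walks every power B_mu^k with k <= n is dominated by B_mu^*;
   therefore B_mu^* u is a subeigenvector of B for mu, regular because B has
   no zero entries.  Finally, a solution x satisfies B_mu x <= x, so
   B_mu^k x <= x for all k and x = B_mu^* x. *)
From Stdlib Require Import Ring Classical FunctionalExtensionality Lia.
From mathcomp Require Import all_boot zify.
Set Implicit Arguments. Unset Strict Implicit. Unset Printing Implicit Defensive.

Section Semifield.
Variable X : isemifield.

Lemma isemifield_ring : semi_ring_theory (szero X) (sone X) (@sadd X) (@smul X) eq.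
Proof.
constructor; [exact: sadd0 | exact: saddC | exact: saddA | exact: smul1
             | exact: smul0 | exact: smulC | exact: smulA | exact: smulDl].
Qed.
Add Ring isemifield_ring : isemifield_ring.

Local Notation "a ⊕ b" := (sadd a b) (at level 50, left associativity).
Local Notation "a ⊗ b" := (smul a b) (at level 40, left associativity).
Local Notation "a ≼ b" := (sle a b) (at level 70).
Local Notation z0 := (szero X).
Local Notation e1 := (sone X).
Implicit Types a b c d r y : X.

Lemma sle_refl a : a ≼ a. Proof. exact: saddid. Qed.

Lemma sle_trans a b c : a ≼ b -> b ≼ c -> a ≼ c.
Proof. by rewrite /sle => h1 h2; rewrite -h2 saddA h1. Qed.

Lemma sle_anti a b : a ≼ b -> b ≼ a -> a = b.
Proof. by rewrite /sle => h1 h2; rewrite -h1 -{1}h2 saddC. Qed.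

Lemma sle_total a b : a ≼ b \/ b ≼ a.
Proof. by rewrite /sle; case: (slinear a b) => h; [right; rewrite saddC | left]. Qed.

Lemma sle0x a : z0 ≼ a. Proof. exact: sadd0. Qed.

Lemma sle0_eq0 a : a ≼ z0 -> a = z0.
Proof. by rewrite /sle => h; rewrite -h saddC sadd0. Qed.

Lemma sle_addl a b : a ≼ a ⊕ b. Proof. by rewrite /sle saddA saddid. Qed.

Lemma sle_addr a b : b ≼ a ⊕ b. Proof. by rewrite saddC; apply: sle_addl. Qed.

Lemma sle_add_lub a b c : a ≼ c -> b ≼ c -> a ⊕ b ≼ c.
Proof. by rewrite /sle => h1 h2; rewrite -saddA h2 h1. Qed.

Lemma sle_mul2r a b c : a ≼ b -> a ⊗ c ≼ b ⊗ c.
Proof. by rewrite /sle => h; rewrite -smulDl h. Qed.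

Lemma sle_mul2l a b c : a ≼ b -> c ⊗ a ≼ c ⊗ b.
Proof. by rewrite !(smulC c); apply: sle_mul2r. Qed.

Lemma sle_mul a b c d : a ≼ b -> c ≼ d -> a ⊗ c ≼ b ⊗ d.
Proof. by move=> h1 h2; apply: sle_trans (sle_mul2r c h1) (sle_mul2l b h2). Qed.

Lemma sle_add a b c d : a ≼ b -> c ≼ d -> a ⊕ c ≼ b ⊕ d.
Proof.
move=> h1 h2; apply: sle_add_lub.
- exact: sle_trans h1 (sle_addl _ _).
- exact: sle_trans h2 (sle_addr _ _).
Qed.

Lemma smulr1 a : a ⊗ e1 = a. Proof. by rewrite smulC smul1. Qed.

Lemma smulr0 a : a ⊗ z0 = z0. Proof. by rewrite smulC smul0. Qed.

Lemma smulVl a : a <> z0 -> sinv a ⊗ a = e1. Proof. by move=> h; rewrite smulC smulV. Qed.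

Lemma smul_neq0 a b : a <> z0 -> b <> z0 -> a ⊗ b <> z0.
Proof. by move=> ha hb e; apply: hb; rewrite -[b]smul1 -(smulVl ha) -smulA e smulr0. Qed.

Lemma sinv_neq0 a : a <> z0 -> sinv a <> z0.
Proof. by move=> ha e; apply: (@sone_neq0 X); rewrite -(smulV ha) e smulr0. Qed.

Lemma sle_neq0 a b : a ≼ b -> a <> z0 -> b <> z0.
Proof. by move=> h ha e; apply: ha; apply: sle0_eq0; rewrite -e. Qed.

Lemma sle_pmul2r_cancel a b c : c <> z0 -> a ⊗ c ≼ b ⊗ c -> a ≼ b.
Proof. by move=> hc /(sle_mul2r (sinv c)); rewrite -!smulA smulV // !smulr1. Qed.

Lemma sinvM a b : a <> z0 -> b <> z0 -> sinv (a ⊗ b) = sinv a ⊗ sinv b.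
Proof.
move=> ha hb; have hab := smul_neq0 ha hb.
transitivity (sinv (a ⊗ b) ⊗ ((a ⊗ sinv a) ⊗ (b ⊗ sinv b))).
  by rewrite !smulV // smul1 smulr1.
transitivity ((a ⊗ b ⊗ sinv (a ⊗ b)) ⊗ (sinv a ⊗ sinv b)); first ring.
by rewrite smulV // smul1.
Qed.

Lemma sinvK a : sinv (sinv a) = a.
Proof.
have [->|ha] := classic (a = z0); first by rewrite !sinv0.
transitivity ((a ⊗ sinv a) ⊗ sinv (sinv a)); first by rewrite smulV // smul1.
by rewrite -smulA smulV ?smulr1 //; apply: sinv_neq0.
Qed.

Definition spow y k := iter k (smul y) e1.
Arguments spow : simpl never.

Lemma spowS y k : spow y k.+1 = y ⊗ spow y k. Proof. by []. Qed.

Lemma spow_sroot p a : 0 < p -> spow (sroot p a) p = a.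
Proof. exact: sroot_spec. Qed.

Lemma sroot1 a : sroot 1 a = a.
Proof. by rewrite -[RHS](spow_sroot a (ltn0Sn 0)) spowS smulr1. Qed.

Lemma spowMn a b k : spow (a ⊗ b) k = spow a k ⊗ spow b k.
Proof. by elim: k => [|k IH]; rewrite ?smul1 // !spowS IH; ring. Qed.

Lemma spow1n k : spow e1 k = e1.
Proof. by elim: k => [//|k IH]; rewrite spowS IH smul1. Qed.

Lemma sle_spow a b k : a ≼ b -> spow a k ≼ spow b k.
Proof. by move=> h; elim: k => [|k IH]; [apply: sle_refl | apply: sle_mul]. Qed.

Lemma spow_neq0 a k : a <> z0 -> spow a k <> z0.
Proof. by move=> h; elim: k => [|k IH]; [apply: sone_neq0 | apply: smul_neq0]. Qed.

Lemma sle_spow_ge1 a k : e1 ≼ a -> 0 < k -> a ≼ spow a k.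
Proof.
move=> h; case: k => // k _; rewrite spowS -{1}(smulr1 a); apply: sle_mul2l.
by elim: k => [|k IH]; [apply: sle_refl | rewrite spowS -(smul1 e1); apply: sle_mul].
Qed.

Lemma sle_spow2 a b k : 0 < k -> spow a k ≼ spow b k -> a ≼ b.
Proof.
move=> hk h; case: (sle_total a b) => // hba.
suff -> : a = b by apply: sle_refl.
have [b0|bn0] := classic (b = z0).
  have [->//|an0] := classic (a = z0); case: (@spow_neq0 a k an0).
  apply: sle0_eq0; apply: sle_trans h _; case: k hk => // k _.
  by rewrite b0 spowS smul0; apply: sle_refl.
pose z := a ⊗ sinv b.
have ea : a = z ⊗ b by rewrite /z -smulA smulVl // smulr1.
have z1 : e1 ≼ z by apply: (sle_pmul2r_cancel bn0); rewrite smul1 -ea.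
have zk1 : spow z k ≼ e1.
  by apply: (sle_pmul2r_cancel (@spow_neq0 b k bn0)); rewrite smul1 -spowMn -ea.
by rewrite ea (sle_anti (sle_trans (sle_spow_ge1 z1 hk) zk1) z1) smul1.
Qed.

Lemma sle_bigsum_lub (I : Type) (s : seq I) (F : I -> X) c :
  (forall i, F i ≼ c) -> \big[@sadd X/z0]_(i <- s) F i ≼ c.
Proof.
move=> h; apply: (big_ind (fun y => y ≼ c)) => //; first exact: sle0x.
by move=> y y'; apply: sle_add_lub.
Qed.

Lemma sle_bigsum (I : eqType) (s : seq I) (F : I -> X) i0 :
  i0 \in s -> F i0 ≼ \big[@sadd X/z0]_(i <- s) F i.
Proof.
elim: s => // a s IH; rewrite inE big_cons => /orP [/eqP ->|h]; first exact: sle_addl.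
exact: sle_trans (IH h) (sle_addr _ _).
Qed.

Lemma sle_bigsum_ord m (F : 'I_m -> X) i0 : F i0 ≼ \big[@sadd X/z0]_(i < m) F i.
Proof. exact/sle_bigsum/mem_index_enum. Qed.

Lemma bigsum_mulr (I : Type) (s : seq I) (F : I -> X) c :
  \big[@sadd X/z0]_(i <- s) F i ⊗ c = \big[@sadd X/z0]_(i <- s) (F i ⊗ c).
Proof. by apply: (big_morph (fun y => y ⊗ c)) => [y y'|]; rewrite ?smulDl ?smul0. Qed.

Lemma bigsum_mull (I : Type) (s : seq I) (F : I -> X) c :
  c ⊗ \big[@sadd X/z0]_(i <- s) F i = \big[@sadd X/z0]_(i <- s) (c ⊗ F i).
Proof. by rewrite smulC bigsum_mulr; apply: eq_bigr => i _; apply: smulC. Qed.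

Variable n : nat.
Implicit Types (M N : mx X n) (u v : vec X n).

Lemma mxpowS M k : mxpow M k.+1 = mxmul (mxpow M k) M. Proof. by []. Qed.

Lemma mxpow0 M i j : mxpow M 0 i j = if i == j then e1 else z0. Proof. by []. Qed.

Lemma sle_mxstar_mxpow N k i j : k < n -> mxpow N k i j ≼ mxstar N i j.
Proof. by move=> hk; apply: (sle_bigsum_ord (fun p : 'I_n => _) (Ordinal hk)). Qed.

Lemma sle1_mxstar_diag N i : e1 ≼ mxstar N i i.
Proof.
have hn : 0 < n by case: n i => [[]|].
by have := sle_mxstar_mxpow N i i hn; rewrite mxpow0 eqxx.
Qed.

Fixpoint walk_weight M (a : 'I_n) (s : seq 'I_n) : X :=
  if s is b :: s' then M a b ⊗ walk_weight M b s' else e1.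

Lemma walk_weight_cat M (a : 'I_n) s1 s2 :
  walk_weight M a (s1 ++ s2) = walk_weight M a s1 ⊗ walk_weight M (last a s1) s2.
Proof. by elim: s1 a => [|b s1 IH] a /=; rewrite ?smul1 // IH smulA. Qed.

Lemma walk_weight_rcons M (a : 'I_n) s j :
  walk_weight M a (rcons s j) = walk_weight M a s ⊗ M (last a s) j.
Proof. by rewrite -cats1 walk_weight_cat /= smulr1. Qed.

Lemma walk_weight_scale M c (a : 'I_n) s :
  walk_weight (mxscale c M) a s = spow c (size s) ⊗ walk_weight M a s.
Proof.
elim: s a => [|b s IH] a /=; first by rewrite smul1.
by rewrite IH /mxscale spowS; ring.
Qed.

Lemma walk_weight_le_mxpow M (a : 'I_n) s : walk_weight M a s ≼ mxpow M (size s) a (last a s).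
Proof.
elim/last_ind: s => [|s j IH]; first by rewrite mxpow0 eqxx; apply: sle_refl.
rewrite walk_weight_rcons size_rcons last_rcons mxpowS.
apply: sle_trans (sle_mul2r _ IH) _.
exact: (sle_bigsum_ord (fun l => mxpow M (size s) a l ⊗ M l j)).
Qed.

Lemma mxpow_le_walks M k i j a c :
  (forall s, size s = k -> last i s = j -> walk_weight M i s ⊗ a ≼ c) ->
  mxpow M k i j ⊗ a ≼ c.
Proof.
elim: k i j a c => [|k IH] i j a c h.
  rewrite mxpow0; have [e|_] := eqVneq i j; first exact: (h [::] erefl e).
  by rewrite smul0; apply: sle0x.
rewrite mxpowS /mxmul bigsum_mulr; apply: sle_bigsum_lub => l.
rewrite -smulA; apply: IH => s hs hl.
by rewrite smulA -hl -walk_weight_rcons; apply: h; rewrite ?size_rcons ?last_rcons ?hs.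
Qed.

Lemma split_not_uniq (T : eqType) (a : T) s : ~~ uniq (a :: s) ->
  exists s1 q s2, s = s1 ++ rcons q (last a s1) ++ s2.
Proof.
elim: s a => [//|b s IH] a hu.
case: (boolP (a \in b :: s)) => [ha|ha].
  by case/splitPr: ha => q s2; exists [::], q, s2; rewrite /= cat_rcons.
have /IH [s1 [q [s2 e]]] : ~~ uniq (b :: s).
  by apply: contra hu; rewrite [uniq (a :: _)]cons_uniq ha.
by exists (b :: s1), q, s2; rewrite /= e.
Qed.

Lemma long_walk_not_uniq (a : 'I_n) s : size s = n -> ~~ uniq (a :: s).
Proof.
move=> hs; apply/negP => u.
have := uniq_leq_size (s2 := enum 'I_n) u (fun t _ => ltac:(by rewrite mem_enum)).
by rewrite size_enum_ord /= hs ltnn.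
Qed.

Definition cycles_le1 M :=
  forall (y : 'I_n) q, size q < n -> walk_weight M y (rcons q y) ≼ e1.

(* A walk of length n repeats a vertex; cutting out the cycle between the
   repetitions does not decrease the weight when cycles weigh at most 1. *)
Lemma walk_weight_le_mxstar M (a : 'I_n) s : cycles_le1 M -> size s <= n ->
  walk_weight M a s ≼ mxstar M a (last a s).
Proof.
move=> hcyc hsn; have [hlt|hge] := ltnP (size s) n.
  exact: sle_trans (walk_weight_le_mxpow M a s) (sle_mxstar_mxpow _ _ _ hlt).
have hs : size s = n by apply/eqP; rewrite eqn_leq hsn hge.
have [s1 [q [s2 e]]] := split_not_uniq (long_walk_not_uniq a hs).
move: hs; rewrite [in size s]e !size_cat size_rcons => hs.
have hq : size q < n by rewrite -[X in _ < X]hs addnCA addSn ltnS leq_addr.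
have hshort : size (s1 ++ s2) < n by rewrite size_cat -[X in _ < X]hs ltn_add2l addSn ltnS leq_addl.
have hlast : last a s = last a (s1 ++ s2) by rewrite e !last_cat last_rcons.
rewrite hlast; apply: sle_trans _ (sle_trans (walk_weight_le_mxpow M a _)
                                            (sle_mxstar_mxpow _ _ _ hshort)).
rewrite e !walk_weight_cat last_rcons; apply: sle_mul2l.
by rewrite -{2}(smul1 (walk_weight M _ s2)); apply: sle_mul2r; apply: hcyc.
Qed.

(* Entrywise form of M v <= r v. *)
Definition subeigen M r v := forall i k, M i k ⊗ v k ≼ r ⊗ v i.

Lemma subeigen_scale M r v :
  r <> z0 -> subeigen M r v <-> subeigen (mxscale (sinv r) M) e1 v.
Proof.
move=> hr; split=> h i k.
  by have := sle_mul2l (sinv r) (h i k); rewrite /mxscale !smulA smulVl // smul1.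
have := sle_mul2l r (h i k).
by rewrite /mxscale !smulA smulV // !smul1 smulr1.
Qed.

Lemma subeigen_mxpow M r v : subeigen M r v ->
  forall k i j, mxpow M k i j ⊗ v j ≼ spow r k ⊗ v i.
Proof.
move=> h; elim=> [|k IH] i j.
  rewrite mxpow0; have [<-|_] := eqVneq i j; first exact: sle_refl.
  by rewrite smul0; apply: sle0x.
rewrite mxpowS /mxmul bigsum_mulr; apply: sle_bigsum_lub => l.
rewrite -smulA; apply: sle_trans (sle_mul2l _ (h l j)) _.
rewrite smulA (smulC _ r) -smulA; apply: sle_trans (sle_mul2l _ (IH i l)) _.
by rewrite spowS smulA; apply: sle_refl.
Qed.

Lemma mxstar_subeigen1 N v : subeigen N e1 v -> mxvmul (mxstar N) v = v.
Proof.
move=> h; apply: functional_extensionality => i; apply: sle_anti.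
  apply: sle_bigsum_lub => j; rewrite /mxstar bigsum_mulr; apply: sle_bigsum_lub => p.
  by have := subeigen_mxpow h p i j; rewrite spow1n smul1.
apply: sle_trans (sle_bigsum_ord (fun k => mxstar N i k ⊗ v k) i).
by rewrite -{1}(smul1 (v i)); apply: sle_mul2r; apply: sle1_mxstar_diag.
Qed.

Lemma mxstar_subeigen N u : cycles_le1 N -> subeigen N e1 (mxvmul (mxstar N) u).
Proof.
move=> hcyc i k; rewrite smul1 /mxvmul bigsum_mull; apply: sle_bigsum_lub => j.
apply: sle_trans (sle_bigsum_ord (fun k => mxstar N i k ⊗ u k) j).
rewrite smulA; apply: sle_mul2r.
rewrite /mxstar bigsum_mull; apply: sle_bigsum_lub => p.
rewrite smulC; apply: mxpow_le_walks => s hs hl.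
rewrite smulC -hl -[_ ⊗ _]/(walk_weight N i (k :: s)).
by apply: walk_weight_le_mxstar; rewrite //= hs.
Qed.

Lemma mxstar_regular N u :
  (forall i j, N i j <> z0) -> u <> @vzero X n -> regular (mxvmul (mxstar N) u).
Proof.
move=> hN hu i.
have [j hj] : exists j, u j <> z0.
  apply: NNPP => hnot; apply: hu; apply: functional_extensionality => j.
  by apply: NNPP => hj; apply: hnot; exists j.
apply: (sle_neq0 (sle_bigsum_ord (fun k => mxstar N i k ⊗ u k) j)).
apply: smul_neq0 => //.
have [<-|ne] := eqVneq i j.
  exact: sle_neq0 (sle1_mxstar_diag N i) (@sone_neq0 X).
have h1 : 1 < n by move: ne (ltn_ord i) (ltn_ord j); rewrite -(inj_eq val_inj) /=; lia.
apply: (sle_neq0 (sle_mxstar_mxpow N i j h1) (sle_neq0 _ (hN i j))).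
by have := walk_weight_le_mxpow N i [:: j]; rewrite /= smulr1.
Qed.

Lemma spec_rad_le_subeigen M r v : regular v -> subeigen M r v -> spec_rad M ≼ r.
Proof.
move=> hv h; apply: sle_bigsum_lub => k.
apply: (@sle_spow2 _ _ k.+1) => //; rewrite spow_sroot //.
apply: sle_bigsum_lub => i; apply: (sle_pmul2r_cancel (hv i)).
exact: subeigen_mxpow.
Qed.

Lemma mxtr_mxpow_le M k : 0 < k <= n -> mxtr (mxpow M k) ≼ spow (spec_rad M) k.
Proof.
case: k => // k /= hk.
have := sle_bigsum_ord (fun k : 'I_n => sroot k.+1 (mxtr (mxpow M k.+1))) (Ordinal hk).
by move/(sle_spow k.+1); rewrite spow_sroot.
Qed.

Lemma spec_rad_neq0 M i : M i i <> z0 -> spec_rad M <> z0.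
Proof.
move=> hM; apply: sle_neq0 hM.
apply: sle_trans (sle_bigsum_ord _ (Ordinal (leq_ltn_trans (leq0n i) (ltn_ord i)))).
rewrite /= sroot1; apply: sle_trans (sle_bigsum_ord _ i).
by have := walk_weight_le_mxpow M i [:: i]; rewrite /= smulr1.
Qed.

Lemma cycles_le1_spec_rad M :
  spec_rad M <> z0 -> cycles_le1 (mxscale (sinv (spec_rad M)) M).
Proof.
move=> hmu y q hq; rewrite walk_weight_scale size_rcons.
have := walk_weight_le_mxpow M y (rcons q y); rewrite size_rcons last_rcons => hw.
have hdiag := sle_bigsum_ord (fun i => mxpow M (size q).+1 i i) y.
have htr := mxtr_mxpow_le M (k := (size q).+1) hq.
apply: sle_trans (sle_mul2l _ (sle_trans hw (sle_trans hdiag htr))) _.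
by rewrite -spowMn smulVl // spow1n; apply: sle_refl.
Qed.

Variable A : mx X n.
Local Notation B := (mxadd A (mxpinv A)).

Lemma mxdist_le_subeigen v c : regular v -> subeigen B c v -> mxdist A (outer_pinv v) ≼ c.
Proof.
move=> hv h; have hB i k : sinv (v i) ⊗ B i k ⊗ v k ≼ c.
  apply: (sle_pmul2r_cancel (hv i)).
  have -> : sinv (v i) ⊗ B i k ⊗ v k ⊗ v i = (sinv (v i) ⊗ v i) ⊗ (B i k ⊗ v k) by ring.
  by rewrite smulVl // smul1; apply: h.
apply: sle_add_lub; apply: sle_bigsum_lub => i; apply: sle_bigsum_lub => k.
- rewrite /mxpinv /outer_pinv sinvM ?sinvK //; last exact: sinv_neq0.
  apply: sle_trans (hB k i).
  have -> : sinv (v k) ⊗ v i ⊗ A k i = sinv (v k) ⊗ A k i ⊗ v i by ring.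
  by apply/sle_mul2r/sle_mul2l/sle_addl.
- apply: sle_trans (hB i k).
  have -> : mxpinv A i k ⊗ outer_pinv v k i = sinv (v i) ⊗ mxpinv A i k ⊗ v k.
    by rewrite /outer_pinv; ring.
  by apply/sle_mul2r/sle_mul2l/sle_addr.
Qed.

Lemma subeigen_mxdist v : regular v -> subeigen B (mxdist A (outer_pinv v)) v.
Proof.
move=> hv i k.
have -> : B i k ⊗ v k = (sinv (v i) ⊗ B i k ⊗ v k) ⊗ v i.
  transitivity ((sinv (v i) ⊗ v i) ⊗ (B i k ⊗ v k)); last by ring.
  by rewrite smulVl // smul1.
apply: sle_mul2r; rewrite (smulC (sinv _)) !smulDl.
apply: sle_add; rewrite /mxtr /mxmul /mxpinv /outer_pinv.
- apply: sle_trans (sle_bigsum_ord _ k); apply: sle_trans (sle_bigsum_ord _ i).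
  rewrite /= sinvM ?sinvK //; last exact: sinv_neq0.
  have -> : A i k ⊗ sinv (v i) ⊗ v k = sinv (v i) ⊗ v k ⊗ A i k by ring.
  exact: sle_refl.
- apply: sle_trans (sle_bigsum_ord _ i); apply: sle_trans (sle_bigsum_ord _ k).
  have -> : sinv (A k i) ⊗ sinv (v i) ⊗ v k = sinv (A k i) ⊗ (v k ⊗ sinv (v i)) by ring.
  exact: sle_refl.
Qed.

End Semifield.

Theorem theorem1 (X : isemifield) (n : nat) (A : mx X n) :
  0 < n ->
  (forall i j, mxadd A (mxpinv A) i j <> szero X) ->
  let B := mxadd A (mxpinv A) in
  let mu := spec_rad B in
  let Bmu := mxscale (sinv mu) B in
  ((forall x : vec X n, regular x -> sle mu (mxdist A (outer_pinv x))) /\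
   (exists x : vec X n, regular x /\ mxdist A (outer_pinv x) = mu)) /\
  (forall x : vec X n,
     (regular x /\ mxdist A (outer_pinv x) = mu) <->
     (exists u : vec X n, u <> @vzero X n /\ x = mxvmul (mxstar Bmu) u)).
Proof.
move=> hn hB B mu Bmu.
have hmu : mu <> szero X := spec_rad_neq0 (hB (Ordinal hn) (Ordinal hn)).
have hBmu i j : Bmu i j <> szero X by apply: smul_neq0; [apply: sinv_neq0 | apply: hB].
have mu_le x : regular x -> sle mu (mxdist A (outer_pinv x)).
  by move=> hx; apply: spec_rad_le_subeigen hx (subeigen_mxdist A hx).
have star_opt u : u <> @vzero X n ->
    regular (mxvmul (mxstar Bmu) u) /\ mxdist A (outer_pinv (mxvmul (mxstar Bmu) u)) = mu.
  move=> hu; have hx := mxstar_regular hBmu hu; split=> //.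
  apply: sle_anti (mu_le _ hx); apply: mxdist_le_subeigen hx _.
  by apply/subeigen_scale/mxstar_subeigen/cycles_le1_spec_rad.
have one_neq0 : (fun _ => sone X) <> @vzero X n.
  by move/(congr1 (@^~ (Ordinal hn))); apply: sone_neq0.
split; first by split=> //; exists (mxvmul (mxstar Bmu) (fun _ => sone X)); apply: star_opt.
move=> x; split=> [[hx hD]|[u [hu ->]]]; last exact: star_opt.
exists x; split; first by move/(congr1 (@^~ (Ordinal hn))); apply: hx.
have /subeigen_scale hsub := subeigen_mxdist A hx; rewrite hD in hsub.
by rewrite mxstar_subeigen1 //; apply: hsub.
Qed.
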